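(* Let $\omega=\{\omega_k\}_{k\in\mathbb{N}}$ be a sequence of positive real numbers with $\omega_0=1$, such that there is a constant $C>1$ with $\omega_k\le Ck^2$ and $\omega_k\le\omega_{k+1}$ for all $k\in\mathbb{N}$. Let $H^2_\omega$ be the space of holomorphic functions $f(z)=\sum_{k\ge0}\hat f(k)z^k$ on the unit disc $\mathbb{D}$ with finite norm $\|f\|_\omega=\left(\sum_{k\ge0}|\hat f(k)|^2\omega_k\right)^{1/2}$. Let $f\in H^2_\omega$. Consider the conditions: (a) $\|f\|_\omega=1$ and for every integer $k\ge1$ and every $\lambda\in\mathbb{C}$, $$\|f\,g_{k,\lambda}\|_\omega^2\le \omega_k+|\lambda|^2,\qquad\text{where } g_{k,\lambda}(z)=z^k+\lambda;$$ (b) $\|f\|_\omega=\|f\|_{M}=1$, where $\|f\|_M$ denotes the multiplier norm of $f$ on $H^2_\omega$. Then (b) implies (a), and (a) implies that $f$ is $H^2_\omega$-inner, i.e. $\langle z^j f,f\rangle_\omega=\delta_{0,j}$ for all $j\in\mathbb{N}$.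
   Context: $\mathbb{N}=\{0,1,2,\dots\}$. The inner product on $H^2_\omega$ is $\langle f,g\rangle_\omega=\sum_{k\ge0}\hat f(k)\overline{\hat g(k)}\,\omega_k$, and $\delta_{0,j}$ is the Kronecker delta. A holomorphic function $h$ on $\mathbb{D}$ is a multiplier of $H^2_\omega$ if $g\mapsto hg$ is a bounded operator on $H^2_\omega$; its multiplier norm $\|h\|_M$ is the operator norm of this multiplication operator (condition (b) in particular requires $f$ to be a multiplier). Such spaces $H^2_\omega$ coincide with Dirichlet-type spaces $D_\mu$ with radial measure $\mu$, whose norm is $\|f\|_{H^2}^2+\int_{\mathbb{D}}|f'|^2\,d\mu$. *)

(* Elements of H^2_omega are represented by their
   Taylor coefficient sequences  a : nat -> C  (f(z) = sum_k a k z^k). *)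
From Stdlib Require Import Reals.
From Coquelicot Require Import Coquelicot.
Open Scope R_scope.

Definition inH (w : nat -> R) (a : nat -> C) : Prop :=
  ex_series (fun k => (Cmod (a k)) ^ 2 * w k).

(* ||f||_w^2 and ||f||_w (meaningful when inH w a) *)
Definition wnorm2 (w : nat -> R) (a : nat -> C) : R :=
  Series (fun k => (Cmod (a k)) ^ 2 * w k).
Definition wnorm (w : nat -> R) (a : nat -> C) : R := sqrt (wnorm2 w a).

Definition cprod (a b : nat -> C) : nat -> C :=
  fun n => @sum_n C_AbelianMonoid (fun i => Cmult (a i) (b (n - i)%nat)) n.

(* Taylor coefficients of g_{k,lambda}(z) = z^k + lambda, for k >= 1 *)
Definition gkl (k : nat) (lam : C) : nat -> C :=
  fun n => if Nat.eqb n k then 1%C else if Nat.eqb n 0 then lam else 0%C.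

Definition mult_bound (w : nat -> R) (h : nat -> C) (M : R) : Prop :=
  forall g, inH w g -> inH w (cprod h g) /\ wnorm w (cprod h g) <= M * wnorm w g.

Definition is_mult_norm (w : nat -> R) (h : nat -> C) (M : R) : Prop :=
  mult_bound w h M /\ (forall M', mult_bound w h M' -> M <= M').

Definition shiftc (j : nat) (a : nat -> C) : nat -> C :=
  fun n => if Nat.leb j n then a (n - j)%nat else 0%C.

Definition winner_is (w : nat -> R) (a b : nat -> C) (v : C) : Prop :=
  @is_series C_AbsRing C_NormedModule
    (fun k => Cmult (Cmult (a k) (Cconj (b k))) (RtoC (w k))) v.

Definition admissible_weight (w : nat -> R) : Prop :=
  (forall k, 0 < w k) /\ w 0%nat = 1 /\
  exists Cst, 1 < Cst /\
    (forall k, (1 <= k)%nat -> w k <= Cst * (INR k) ^ 2) /\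
    (forall k, w k <= w (S k)).

(** Multiplying by [g_{k,λ}] gives [f g_{k,λ} = z^k f + λ f], so for [‖f‖ = 1]
    (a) reads [‖z^k f‖² + |λ|² + 2 Re(conj λ ⟨z^k f, f⟩) ≤ ω_k + |λ|²] for every
    [λ].  The left side minus [|λ|²] is affine in [λ] and bounded above, so its
    linear part [⟨z^k f, f⟩] vanishes.  Conversely [‖g_{k,λ}‖² = ω_k + |λ|²],
    so a multiplier of norm 1 satisfies (a). *)
From Stdlib Require Import Reals Lra Lia.
From Coquelicot Require Import Coquelicot.
Open Scope R_scope.

Lemma sum_n_indicator {G : AbelianMonoid} (x : G) (p N : nat) :
  sum_n (fun i => if Nat.eqb i p then x else zero) N =
  if Nat.leb p N then x else zero.
Proof.
  induction N as [|N IH].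
  - rewrite sum_O. destruct (Nat.eqb_spec 0 p), (Nat.leb_spec p 0); now try lia.
  - rewrite sum_Sn, IH.
    destruct (Nat.eqb_spec (S N) p), (Nat.leb_spec p N), (Nat.leb_spec p (S N));
      try lia; now rewrite ?plus_zero_l, ?plus_zero_r.
Qed.

Lemma is_series_indicator (x : R) (p : nat) :
  is_series (fun n => if Nat.eqb n p then x else 0) x.
Proof.
  apply filterlim_ext_loc with (f := fun _ => x); [|apply filterlim_const].
  exists p. intros N HN.
  rewrite (sum_n_indicator (G := R_AbelianMonoid)).
  now destruct (Nat.leb_spec p N); [|lia].
Qed.

Lemma cprod_gkl (a : nat -> C) (k : nat) (lam : C) (n : nat) : (1 <= k)%nat ->
  cprod a (gkl k lam) n = (shiftc k a n + lam * a n)%C.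
Proof.
  intros Hk. unfold cprod.
  rewrite (sum_n_ext_loc _ (fun i =>
    @plus C_AbelianMonoid (if Nat.eqb i (n - k) then shiftc k a n else zero)
                          (if Nat.eqb i n then (lam * a n)%C else zero))).
  - rewrite sum_n_plus, !(sum_n_indicator (G := C_AbelianMonoid)).
    rewrite Nat.leb_refl. destruct (Nat.leb_spec (n - k) n); [reflexivity|lia].
  - intros i Hi. unfold gkl, shiftc.
    change (@plus C_AbelianMonoid) with Cplus. change (@zero C_AbelianMonoid) with (RtoC 0).
    change (?x = ?y) with (@eq C x y).
    destruct (Nat.eqb_spec (n - i) k), (Nat.eqb_spec (n - i) 0),
      (Nat.eqb_spec i (n - k)), (Nat.eqb_spec i n), (Nat.leb_spec k n);
      try lia; try replace i with n by lia; try replace i with (n - k)%nat by lia; ring.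
Qed.

Lemma is_series_wnorm2_gkl (w : nat -> R) (k : nat) (lam : C) :
  w 0%nat = 1 -> (1 <= k)%nat ->
  is_series (fun n => Cmod (gkl k lam n) ^ 2 * w n) (w k + Cmod lam ^ 2).
Proof.
  intros Hw0 Hk.
  eapply is_series_ext;
    [|exact (is_series_plus _ _ _ _ (is_series_indicator (w k) k)
                                    (is_series_indicator (Cmod lam ^ 2) 0))].
  intros n. unfold gkl, plus. simpl.
  destruct (Nat.eqb_spec n k), (Nat.eqb_spec n 0); subst; try lia;
    rewrite ?Cmod_1, ?Cmod_0, ?Hw0; ring.
Qed.

Lemma sqrt_le_cancel (x y : R) : 0 <= y -> sqrt x <= sqrt y -> x <= y.
Proof.
  intros Hy Hxy. destruct (Rle_or_lt x 0); [lra|].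
  apply sqrt_le_0; lra.
Qed.

Lemma sqrt_eq_1 (x : R) : sqrt x = 1 -> x = 1.
Proof.
  intros H. destruct (Rle_or_lt x 0).
  - rewrite sqrt_neg_0 in H; lra.
  - rewrite <- (sqrt_sqrt x) by lra. rewrite H. ring.
Qed.

Lemma mult_bound_1_wnorm2 (w : nat -> R) (h g : nat -> C) :
  mult_bound w h 1 -> inH w g -> 0 <= wnorm2 w g ->
  inH w (cprod h g) /\ wnorm2 w (cprod h g) <= wnorm2 w g.
Proof.
  intros Hh Hg Hpos. destruct (Hh g Hg) as [Hhg Hle]. split; [exact Hhg|].
  apply sqrt_le_cancel; [exact Hpos|].
  unfold wnorm in Hle. lra.
Qed.

Lemma is_series_C (a : nat -> C) (p q : R) :
  is_series (fun n => Re (a n)) p -> is_series (fun n => Im (a n)) q ->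
  @is_series C_AbsRing C_NormedModule a (p, q).
Proof.
  intros Hp Hq. apply filterlim_locally. intros eps.
  generalize (filter_and _ _ (proj1 (filterlim_locally _ _) Hp eps)
                             (proj1 (filterlim_locally _ _) Hq eps)).
  apply filter_imp. intros N [HN1 HN2].
  assert (E : forall M, sum_n a M = (sum_n (fun n => Re (a n)) M,
                                     sum_n (fun n => Im (a n)) M)).
  { induction M as [|M IH].
    - rewrite !sum_O. now destruct (a 0%nat).
    - now rewrite !sum_Sn, IH. }
  rewrite E. now split.
Qed.

Lemma im_le_Cmod (c : C) : Rabs (Im c) <= Cmod c.
Proof.
  pose proof (re_le_Cmod (c * Ci)) as H.
  now rewrite re_mult_Ci, Rabs_Ropp, Cmod_mult, Cmod_Ci, Rmult_1_r in H.
Qed.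

Section WeightedInnerProduct.

Variable w : nat -> R.
Hypothesis w_ge0 : forall n, 0 <= w n.

Definition winner_term (u v : nat -> C) (n : nat) : C :=
  (u n * Cconj (v n) * RtoC (w n))%C.

Lemma Cmod_winner_term_le (u v : nat -> C) (n : nat) :
  Cmod (winner_term u v n) <= Cmod (u n) ^ 2 * w n + Cmod (v n) ^ 2 * w n.
Proof.
  unfold winner_term. rewrite !Cmod_mult, Cmod_conj, Cmod_R, Rabs_pos_eq by auto.
  pose proof (w_ge0 n). pose proof (pow2_ge_0 (Cmod (u n) - Cmod (v n))).
  pose proof (Cmod_ge_0 (u n)). pose proof (Cmod_ge_0 (v n)). nra.
Qed.

Lemma ex_series_Re_winner (u v : nat -> C) : inH w u -> inH w v ->
  ex_series (fun n => Re (winner_term u v n)).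
Proof.
  intros Hu Hv.
  apply (@ex_series_le R_AbsRing R_CompleteNormedModule _
           (fun n => Cmod (u n) ^ 2 * w n + Cmod (v n) ^ 2 * w n));
    [|exact (@ex_series_plus R_AbsRing R_NormedModule _ _ Hu Hv)].
  intros n. eapply Rle_trans; [apply re_le_Cmod|apply Cmod_winner_term_le].
Qed.

Lemma ex_series_Im_winner (u v : nat -> C) : inH w u -> inH w v ->
  ex_series (fun n => Im (winner_term u v n)).
Proof.
  intros Hu Hv.
  apply (@ex_series_le R_AbsRing R_CompleteNormedModule _
           (fun n => Cmod (u n) ^ 2 * w n + Cmod (v n) ^ 2 * w n));
    [|exact (@ex_series_plus R_AbsRing R_NormedModule _ _ Hu Hv)].
  intros n. eapply Rle_trans; [apply im_le_Cmod|apply Cmod_winner_term_le].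
Qed.

Lemma winner_is_wnorm2 (a : nat -> C) : inH w a -> winner_is w a a (RtoC (wnorm2 w a)).
Proof.
  intros Ha. apply is_series_C.
  - eapply is_series_ext; [|exact (Series_correct _ Ha)].
    intros n. unfold winner_term. rewrite Cmod2_alt.
    destruct (a n). simpl. ring.
  - rewrite <- (Rmult_0_r (wnorm2 w a)).
    eapply is_series_ext; [|exact (is_series_scal_r 0 _ _ (Series_correct _ Ha))].
    intros n. unfold winner_term. destruct (a n). simpl. ring.
Qed.

Lemma wnorm2_add_scal (u v : nat -> C) (lam : C) : inH w u -> inH w v ->
  wnorm2 w (fun n => u n + lam * v n)%C =
  wnorm2 w u + Cmod lam ^ 2 * wnorm2 w v +
  2 * (Re lam * Series (fun n => Re (winner_term u v n)) +
       Im lam * Series (fun n => Im (winner_term u v n))).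
Proof.
  intros Hu Hv. unfold wnorm2. apply is_series_unique.
  pose proof (Series_correct _ (ex_series_Re_winner u v Hu Hv)) as HP.
  pose proof (Series_correct _ (ex_series_Im_winner u v Hu Hv)) as HQ.
  eapply is_series_ext; [|exact (is_series_plus _ _ _ _
    (is_series_plus _ _ _ _ (Series_correct _ Hu)
                            (is_series_scal_l (Cmod lam ^ 2) _ _ (Series_correct _ Hv)))
    (is_series_scal_l 2 _ _ (is_series_plus _ _ _ _ (is_series_scal_l (Re lam) _ _ HP)
                                                    (is_series_scal_l (Im lam) _ _ HQ))))].
  intros n. rewrite !Cmod2_alt. unfold winner_term, plus, scal. simpl. unfold mult. simpl.
  destruct (u n), (v n), lam. simpl. ring.
Qed.

Lemma linear_bounded_above_eq_0 (c B : R) : (forall t, t * c <= B) -> c = 0.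
Proof.
  intros H. destruct (Req_dec c 0) as [|Hc]; [assumption|].
  specialize (H ((Rabs B + 1) / c)).
  replace ((Rabs B + 1) / c * c) with (Rabs B + 1) in H by (field; exact Hc).
  pose proof (Rle_abs B). lra.
Qed.

Lemma winner_is_0_of_wnorm2_bound (u v : nat -> C) (B : R) :
  inH w u -> inH w v ->
  (forall lam, wnorm2 w (fun n => u n + lam * v n)%C <= B + Cmod lam ^ 2 * wnorm2 w v) ->
  winner_is w u v 0%C.
Proof.
  intros Hu Hv Hbound.
  set (P := Series (fun n => Re (winner_term u v n))).
  set (Q := Series (fun n => Im (winner_term u v n))).
  assert (HP : P = 0).
  { apply (linear_bounded_above_eq_0 _ (B - wnorm2 w u)). intros t.
    specialize (Hbound (t / 2, 0)).
    rewrite wnorm2_add_scal in Hbound by assumption. fold P Q in Hbound.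
    change (Re (t / 2, 0)) with (t / 2) in Hbound.
    change (Im (t / 2, 0)) with 0 in Hbound. lra. }
  assert (HQ : Q = 0).
  { apply (linear_bounded_above_eq_0 _ (B - wnorm2 w u)). intros t.
    specialize (Hbound (0, t / 2)).
    rewrite wnorm2_add_scal in Hbound by assumption. fold P Q in Hbound.
    change (Re (0, t / 2)) with 0 in Hbound.
    change (Im (0, t / 2)) with (t / 2) in Hbound. lra. }
  apply is_series_C.
  - rewrite <- HP. exact (Series_correct _ (ex_series_Re_winner u v Hu Hv)).
  - rewrite <- HQ. exact (Series_correct _ (ex_series_Im_winner u v Hu Hv)).
Qed.

End WeightedInnerProduct.

Theorem theorem2p1 (w : nat -> R) (f : nat -> C) :
  admissible_weight w ->
  inH w f ->
  let cond_a :=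
    wnorm w f = 1 /\
    (forall (k : nat) (lam : C), (1 <= k)%nat ->
       inH w (cprod f (gkl k lam)) /\
       wnorm2 w (cprod f (gkl k lam)) <= w k + (Cmod lam) ^ 2) in
  let cond_b := wnorm w f = 1 /\ is_mult_norm w f 1 in
  (cond_b -> cond_a) /\
  (cond_a -> forall j : nat,
     winner_is w (shiftc j f) f (if Nat.eqb j 0 then 1%C else 0%C)).
Proof.
  intros [Hw_pos [Hw0 _]] Hf cond_a cond_b.
  assert (Hw : forall n, 0 <= w n) by (intros n; apply Rlt_le, Hw_pos).
  split.
  - intros [Hnorm [Hmult _]]. split; [exact Hnorm|]. intros k lam Hk.
    pose proof (is_series_wnorm2_gkl w k lam Hw0 Hk) as Hg.
    replace (w k + Cmod lam ^ 2) with (wnorm2 w (gkl k lam))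
      by exact (is_series_unique _ _ Hg).
    apply mult_bound_1_wnorm2; [exact Hmult|now exists (w k + Cmod lam ^ 2)|].
    unfold wnorm2. rewrite (is_series_unique _ _ Hg).
    pose proof (Hw k). pose proof (pow2_ge_0 (Cmod lam)). lra.
  - intros [Hnorm Ha] [|k]; pose proof (sqrt_eq_1 _ Hnorm) as Hnorm2.
    + simpl. rewrite <- Hnorm2.
      eapply is_series_ext; [|exact (winner_is_wnorm2 w f Hf)].
      intros n. unfold winner_term, shiftc. simpl. now rewrite Nat.sub_0_r.
    + assert (Hshift : forall lam n,
                 cprod f (gkl (S k) lam) n = (shiftc (S k) f n + lam * f n)%C)
        by (intros; apply cprod_gkl; lia).
      apply (winner_is_0_of_wnorm2_bound w Hw _ _ (w (S k))); [|exact Hf|].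
      * destruct (Ha (S k) 0%C) as [Hi _]; [lia|].
        eapply ex_series_ext; [|exact Hi]. intros n. cbv beta. rewrite Hshift.
        f_equal. f_equal. f_equal. ring.
      * intros lam. rewrite Hnorm2, Rmult_1_r.
        destruct (Ha (S k) lam) as [_ Hle]; [lia|].
        unfold wnorm2 in Hle |- *. now rewrite (Series_ext _ _ (fun n => f_equal
          (fun z => Cmod z ^ 2 * w n) (Hshift lam n))) in Hle.
Qed.
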